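(* Let $\varepsilon\in\{1,-1\}$ and $n\ge2$. Then $$\sum_{\sigma\in\mathcal D^D_n}\varepsilon^{\ell_D(\sigma)}q^{\mathrm{Dmaj}(\sigma)}=\sum_{\sigma\in\mathcal D^\Delta_n}\varepsilon^{\ell_B(\sigma)}(\varepsilon q)^{\mathrm{fmaj}(\sigma)}+\frac{\varepsilon}{2}\left(\sum_{\sigma\in\mathcal D^B_{n-1}}\varepsilon^{\ell_B(\sigma)}q^{\mathrm{fmaj}(\sigma)}-\sum_{\sigma\in\mathcal D^B_{n-1}}\varepsilon^{\ell_B(\sigma)}(-q)^{\mathrm{fmaj}(\sigma)}\right).$$
   Context: $B_n$ is the set of words $\sigma=\sigma_1\cdots\sigma_n$ with $\sigma_i\in\{\pm1,\dots,\pm n\}$ and $|\sigma_1|\cdots|\sigma_n|$ a permutation of $[n]$; $\mathrm{neg}(\sigma)$ is the number of negative letters; $D_n=\{\sigma\in B_n:\mathrm{neg}(\sigma)\text{ even}\}$; $\Delta_n=\{\sigma\in B_n:\sigma_n>0\}$. A derangement is an element with $\sigma_i\ne i$ for all $i$; $\mathcal D^B_n,\mathcal D^D_n,\mathcal D^\Delta_n$ denote the derangements in $B_n,D_n,\Delta_n$. $\mathrm{inv}$ in usual order, $\ell_B(\sigma)=\mathrm{inv}(\sigma)-\sum_{i:\sigma_i<0}\sigma_i$, $\ell_D(\sigma)=\ell_B(\sigma)-\mathrm{neg}(\sigma)$. Order $\prec$: $-1\prec-2\prec\cdots\prec-N\prec1\prec\cdots\prec N$; $\mathrm{maj}_\prec(w)=\sum_{i:w_i\succ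 w_{i+1}}i$; $\mathrm{fmaj}(w)=2\mathrm{maj}_\prec(w)+\mathrm{neg}(w)$; $\mathrm{Dmaj}(\sigma)=\mathrm{fmaj}(\sigma_1\cdots\sigma_{n-1}|\sigma_n|)$. *)

From HB Require Import structures.
From mathcomp Require Import all_boot all_order all_algebra all_fingroup.
Set Implicit Arguments. Unset Strict Implicit. Unset Printing Implicit Defensive.
Import Order.TTheory GRing.Theory Num.Theory.
Local Open Scope ring_scope.

(* A signed permutation of [n] is encoded as a pair (s, b) : 'S_n * {ffun 'I_n -> bool};
   its word is sigma_i = (-1)^(b i) * (s i + 1), i = 1..n (stored 0-indexed). *)
Definition bperm (n : nat) := ('S_n * {ffun 'I_n -> bool})%type.

Definition bword n (x : bperm n) : seq int :=
  [seq (if x.2 i then -1 else 1) * ((x.1 i).+1)%:Z | i <- enum 'I_n].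

Definition negw (w : seq int) : nat := count (fun a => a < 0) w.

Definition invw (w : seq int) : nat :=
  \sum_(i < size w) \sum_(j < size w | (i < j)%N)
     nat_of_bool (nth (0:int) w j < nth (0:int) w i)%R.

(* ell_B = inv - sum_{w_i<0} w_i ;  -w_i = |w_i| for negative letters *)
Definition ellB (w : seq int) : nat := (invw w + \sum_(a <- w | (a < 0)%R) `|a|%N)%N.
(* ell_D = ell_B - neg (always >= 0, since ell_B >= neg) *)
Definition ellD (w : seq int) : nat := (ellB w - negw w)%N.

(* the order  -1 < -2 < ... < -N < 1 < ... < N  (strict), on nonzero letters *)
Definition prec_lt (a b : int) : bool :=
  if a < 0 then (0 < b) || ((b < 0) && (b < a)) else (0 < b) && (a < b).

Definition majp (w : seq int) : nat :=
  \sum_(i < (size w).-1 | prec_lt (nth (0:int) w i.+1) (nth (0:int) w i)) i.+1.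

Definition fmaj (w : seq int) : nat := (2 * majp w + negw w)%N.

Definition Dmaj (w : seq int) : nat :=
  fmaj (take (size w).-1 w ++ [:: Posz `|last (0:int) w|%N]).

Definition bderangement n (x : bperm n) : bool :=
  [forall i : 'I_n, nth (0:int) (bword x) i != (i.+1)%:Z].

Definition inD n (x : bperm n) : bool := ~~ odd (negw (bword x)).
Definition inDelta n (x : bperm n) : bool := 0 < last (0:int) (bword x).

From HB Require Import structures.
From mathcomp Require Import all_boot all_order all_algebra all_fingroup.
From mathcomp Require Import zify.
Set Implicit Arguments. Unset Strict Implicit. Unset Printing Implicit Defensive.
Import Order.TTheory GRing.Theory Num.Theory.
Local Open Scope ring_scope.

(* Pair each signed permutation [y] of [n] whose last letter [c] is positive
   with [y'], obtained by negating that letter.  Exactly one of [y], [y'] lies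
   in D_n, and Dmaj(y) = Dmaj(y') = fmaj(y).  Since fmaj = neg (mod 2) and
   negating [c] changes ell_B by 2c - 1, the D-weight of either one equals the
   Delta-weight eps^ell_B (eps q)^fmaj of [y].  Both are derangements iff the
   first n - 1 letters are, except when [y] ends with the fixed point n: then
   only [y'] is, and it lies in D_n iff neg(y) is odd.  Deleting the letter n
   maps these [y] onto the derangements of B_{n-1} with odd neg, i.e. with
   odd fmaj, which is exactly what (q^fmaj - (-q)^fmaj)/2 selects. *)

Lemma count_sum_nth (T : Type) (x0 : T) (a : pred T) (s : seq T) :
  count a s = (\sum_(i < size s) a (nth x0 s i))%N.
Proof.
rewrite -sum1_count (big_nth x0) big_mkord big_mkcond /=.
by apply: eq_bigr => i _; case: (a _).
Qed.

Lemma count_lt_split (s : seq int) (c c' : int) : c' <= c ->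
  count (fun a => c' < a) s
  = (count (fun a => (c < a)%R) s
     + count (fun a => ((c' < a) && (a <= c))%R) s)%N.
Proof.
move=> le_c'c; elim: s => //= a s ->.
by case: (ltrP c a) => ?; case: (ltrP c' a) => ? /=; lia.
Qed.

Lemma sum_ord_ltn n v : (v <= n)%N -> (\sum_(j < n) (j < v)%N)%N = v.
Proof.
move=> le_vn; transitivity (\sum_(j < n | (j < v)%N) 1)%N.
  by rewrite [RHS]big_mkcond; apply: eq_bigr => j _; case: (j < v)%N.
by rewrite (big_ord_narrow le_vn) sum1_card card_ord.
Qed.

Lemma invw_rcons (u : seq int) c :
  invw (rcons u c) = (invw u + count (fun a => (c < a)%R) u)%N.
Proof.
rewrite /invw size_rcons big_ord_recr /=.
rewrite [X in (_ + X)%N]big_pred0; last first.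
  by move=> j /=; rewrite ltnNge -ltnS ltn_ord.
rewrite addn0 (count_sum_nth 0) -big_split /=.
apply: eq_bigr => i _.
rewrite big_mkcond big_ord_recr /= ltn_ord (nth_rcons _ _ _ (size u)) ltnn eqxx.
rewrite (nth_rcons _ _ _ i) ltn_ord [in RHS]big_mkcond /=.
by congr (_ + _)%N; apply: eq_bigr => j _; rewrite !nth_rcons !ltn_ord.
Qed.

Lemma negw_rcons (u : seq int) c : negw (rcons u c) = (negw u + (c < 0)%R)%N.
Proof. by rewrite /negw -cats1 count_cat /= addn0. Qed.

Lemma ellB_rcons (u : seq int) c :
  ellB (rcons u c)
  = (ellB u + count (fun a => (c < a)%R) u + (if (c < 0)%R then `|c|%N else 0))%N.
Proof. rewrite /ellB invw_rcons big_rcons /=; lia. Qed.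

Lemma majp_rcons (u : seq int) c :
  ~~ prec_lt c (last 0 u) -> majp (rcons u c) = majp u.
Proof.
case: u => [|a u] not_desc; first by rewrite /majp /= !big_ord0.
rewrite /majp size_rcons /= big_mkcond big_ord_recr /=.
have nth_init i : (i <= size u)%N -> nth 0 (a :: rcons u c) i = nth 0 (a :: u) i.
  by move=> le_iu; rewrite -rcons_cons nth_rcons /= ltnS le_iu.
rewrite nth_init // nth_rcons ltnn eqxx -(last_nth 0) (negbTE not_desc) addn0.
rewrite [in RHS]big_mkcond; apply: eq_bigr => i _ /=.
by rewrite nth_init ?nth_rcons ?ltn_ord // ltnW.
Qed.

Lemma odd_fmaj w : odd (fmaj w) = odd (negw w).
Proof. by rewrite /fmaj oddD oddM. Qed.

Lemma negw_le_ellB w : (negw w <= ellB w)%N.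
Proof.
rewrite /ellB /negw -sum1_count; apply: leq_trans (leq_addl _ _).
by apply: leq_sum => a; rewrite absz_gt0; case: eqP => // ->.
Qed.

Lemma odd_ellD w : odd (ellD w) = odd (ellB w) (+) odd (negw w).
Proof. by rewrite /ellD oddB // negw_le_ellB. Qed.

Lemma Dmaj_rcons u c : Dmaj (rcons u c) = fmaj (rcons u (Posz `|c|%N)).
Proof. by rewrite /Dmaj size_rcons -cats1 take_size_cat // last_cat cats1. Qed.

Definition letter n (x : bperm n) (i : 'I_n) : int :=
  (if x.2 i then -1 else 1) * ((x.1 i).+1)%:Z.

Lemma nth_bword n (x : bperm n) (i : 'I_n) : nth 0 (bword x) i = letter x i.
Proof. by rewrite /bword (nth_map i) ?size_enum_ord ?ltn_ord // nth_ord_enum. Qed.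

Definition init_word m (x : bperm m.+1) : seq int :=
  [seq letter x (widen_ord (leqnSn m) i) | i <- enum 'I_m].

Lemma bword_last m (x : bperm m.+1) :
  bword x = rcons (init_word x) (letter x ord_max).
Proof. by rewrite /bword enum_ordSr map_rcons -map_comp. Qed.

Lemma widen_neq_max m (i : 'I_m) : (widen_ord (leqnSn m) i == ord_max) = false.
Proof. by rewrite -val_eqE /= ltn_eqF. Qed.

Lemma widen_lift m (i : 'I_m) : widen_ord (leqnSn m) i = lift ord_max i.
Proof. by apply: val_inj; rewrite /= /bump leqNgt ltn_ord. Qed.

(* Apart from +-c itself, excluded by injectivity, these are the letters of
   absolute value below c, one for each such value. *)
Lemma count_init_abs_lt_last m (x : bperm m.+1) :
  count (fun a => (- ((x.1 ord_max).+1)%:Z < a) && (a <= ((x.1 ord_max).+1)%:Z))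
    (init_word x)
  = x.1 ord_max.
Proof.
rewrite /init_word count_map -sum1_count big_enum_cond /= big_mkcond /=.
transitivity (\sum_(i < m) (x.1 (widen_ord (leqnSn m) i) < x.1 ord_max)%N)%N.
  apply: eq_bigr => i _ /=.
  have : x.1 (widen_ord (leqnSn m) i) != x.1 ord_max.
    by rewrite (inj_eq perm_inj) widen_neq_max.
  rewrite -val_eqE /letter /=.
  by case: (x.2 _); move: (nat_of_ord _) (nat_of_ord _) => a b ?; case: ifP; lia.
transitivity (\sum_(i < m.+1) (x.1 i < x.1 ord_max)%N)%N.
  by rewrite big_ord_recr /= ltnn addn0.
rewrite (reindex_inj (@perm_inj _ x.1^-1)) /=.
under eq_bigr => j _ do rewrite permKV.
exact/sum_ord_ltn/ltnW.
Qed.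

Definition flip_last m (x : bperm m.+1) : bperm m.+1 :=
  (x.1, [ffun i => if i == ord_max then ~~ x.2 i else x.2 i]).

Lemma flip_lastK m : involutive (@flip_last m).
Proof.
move=> [s b]; congr (_, _); apply/ffunP => i; rewrite !ffunE.
by case: eqP => // ->; rewrite negbK.
Qed.

Lemma flip_last_max m (x : bperm m.+1) : (flip_last x).2 ord_max = ~~ x.2 ord_max.
Proof. by rewrite ffunE eqxx. Qed.

Lemma init_word_flip_last m (x : bperm m.+1) :
  init_word (flip_last x) = init_word x.
Proof. by apply: eq_map => i; rewrite /letter /= ffunE widen_neq_max. Qed.

Lemma big_flip_last (R : nmodType) m (F : bperm m.+1 -> R) :
  \sum_x F x = \sum_(y : bperm m.+1 | ~~ y.2 ord_max) (F y + F (flip_last y)).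
Proof.
rewrite big_split /= addrC (bigID (fun x : bperm m.+1 => x.2 ord_max)) /=.
congr (_ + _); rewrite (reindex_inj (can_inj (@flip_lastK m))) /=.
by apply: eq_bigl => y; rewrite flip_last_max.
Qed.

Section FlipLast.
Variables (m : nat) (x : bperm m.+1).
Hypothesis last_pos : ~~ x.2 ord_max.

Lemma bword_last_pos : bword x = rcons (init_word x) (Posz (x.1 ord_max).+1).
Proof. by rewrite bword_last /letter (negbTE last_pos) mul1r. Qed.

Lemma bword_flip_last :
  bword (flip_last x) = rcons (init_word x) (- Posz (x.1 ord_max).+1).
Proof.
rewrite bword_last init_word_flip_last /letter flip_last_max.
by rewrite last_pos mulN1r.
Qed.

Lemma Dmaj_last_pos : Dmaj (bword x) = fmaj (bword x).
Proof. by rewrite bword_last_pos Dmaj_rcons. Qed.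

Lemma Dmaj_flip_last : Dmaj (bword (flip_last x)) = fmaj (bword x).
Proof. by rewrite bword_flip_last bword_last_pos Dmaj_rcons. Qed.

Lemma odd_negw_flip_last :
  odd (negw (bword (flip_last x))) = ~~ odd (negw (bword x)).
Proof. by rewrite bword_flip_last bword_last_pos !negw_rcons addn0 addn1. Qed.

Lemma odd_ellB_flip_last :
  odd (ellB (bword (flip_last x))) = ~~ odd (ellB (bword x)).
Proof.
rewrite bword_flip_last bword_last_pos !ellB_rcons.
rewrite (count_lt_split _ (c := Posz (x.1 ord_max).+1)) //.
rewrite count_init_abs_lt_last /= addn0 addnA -addnA -addSnnS addSn addnn.
by rewrite oddD oddS odd_double addbT.
Qed.

End FlipLast.

Section Extend.
Variable m : nat.

Definition extend (z : bperm m) : bperm m.+1 :=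
  (lift_perm ord_max ord_max z.1,
   [ffun k => if unlift ord_max k is Some j then z.2 j else false]).

Definition restrict_perm (s : 'S_m.+1) (k : 'I_m) : 'I_m :=
  odflt k (unlift (s ord_max) (s (lift ord_max k))).

Lemma restrict_permK (s : 'S_m.+1) k :
  lift (s ord_max) (restrict_perm s k) = s (lift ord_max k).
Proof.
rewrite /restrict_perm; have:= neq_lift ord_max k.
by rewrite -(can_eq (permK s)) => /unlift_some[] ? ? ->.
Qed.

Lemma restrict_perm_inj (s : 'S_m.+1) : injective (restrict_perm s).
Proof.
move=> k1 k2 eq_k; apply: (@lift_inj _ ord_max); apply: (can_inj (permK s)).
by rewrite -!restrict_permK eq_k.
Qed.

Definition restrict (y : bperm m.+1) : bperm m :=
  (perm (@restrict_perm_inj y.1), [ffun j => y.2 (lift ord_max j)]).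

Lemma big_extend (R : nmodType) (F : bperm m.+1 -> R) (P : pred (bperm m.+1)) :
  \sum_(y : bperm m.+1 | [&& ~~ y.2 ord_max, y.1 ord_max == ord_max & P y]) F y
  = \sum_(z | P (extend z)) F (extend z).
Proof.
rewrite (reindex extend); last first.
  exists restrict => [[s b] _ | [s b]].
    congr (_, _); last by apply/ffunP => j; rewrite !ffunE liftK.
    apply/permP => k.
    by rewrite permE /restrict_perm lift_perm_lift lift_perm_id liftK.
  rewrite inE => /and3P[/= b_max /eqP s_max _]; congr (_, _).
    apply/permP => k; case: (unliftP ord_max k) => [k'|] ->.
      by rewrite lift_perm_lift permE -{1}s_max restrict_permK.
    by rewrite lift_perm_id s_max.
  apply/ffunP => k; rewrite !ffunE; case: (unliftP ord_max k) => [k'|] ->.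
    by rewrite ffunE.
  exact/esym/negbTE.
by apply: eq_bigl => z; rewrite /extend /= ffunE unlift_none lift_perm_id eqxx.
Qed.

Lemma letter_extend_widen (z : bperm m) i :
  letter (extend z) (widen_ord (leqnSn m) i) = letter z i.
Proof. by rewrite widen_lift /letter /= ffunE liftK lift_perm_lift lift_max. Qed.

Lemma bword_extend (z : bperm m) : bword (extend z) = rcons (bword z) (Posz m.+1).
Proof.
rewrite bword_last /letter /= ffunE unlift_none lift_perm_id mul1r.
by congr rcons; apply: eq_map => i; rewrite letter_extend_widen.
Qed.

Lemma bword_le (z : bperm m) : all (fun a => a <= Posz m) (bword z).
Proof.
rewrite /bword all_map; apply/allP => i _ /=.
rewrite /letter; have := ltn_ord (z.1 i).
by case: (z.2 i); move: (nat_of_ord _); lia.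
Qed.

Lemma ellB_extend (z : bperm m) : ellB (bword (extend z)) = ellB (bword z).
Proof.
rewrite bword_extend ellB_rcons /= (@eq_in_count _ _ pred0) ?count_pred0 ?addn0 //.
by move=> a /(allP (bword_le z)) /=; lia.
Qed.

Lemma negw_extend (z : bperm m) : negw (bword (extend z)) = negw (bword z).
Proof. by rewrite bword_extend negw_rcons addn0. Qed.

Lemma fmaj_extend (z : bperm m) : fmaj (bword (extend z)) = fmaj (bword z).
Proof.
rewrite /fmaj negw_extend bword_extend majp_rcons //.
have : last 0 (bword z) <= Posz m.
  have := mem_last 0 (bword z); rewrite inE => /orP[/eqP -> //|].
  exact: (allP (bword_le z)).
by rewrite /prec_lt /=; move: (last 0 _) => b le_bm; apply/negP => /andP[_]; lia.
Qed.

End Extend.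

Definition init_deranged m (x : bperm m.+1) : bool :=
  [forall i : 'I_m, letter x (widen_ord (leqnSn m) i) != (i.+1)%:Z].

Lemma bderangement_last m (x : bperm m.+1) :
  bderangement x = init_deranged x && (letter x ord_max != (m.+1)%:Z).
Proof.
apply/forallP/andP => [der_x|[/forallP der_init last_neq] i].
  split; last by have := der_x ord_max; rewrite nth_bword.
  by apply/forallP => i; have := der_x (widen_ord (leqnSn m) i); rewrite nth_bword.
rewrite nth_bword; have [j ->|->] := unliftP ord_max i => //.
by rewrite -widen_lift der_init.
Qed.

Lemma letter_last_neq m (x : bperm m.+1) :
  (letter x ord_max != (m.+1)%:Z) = x.2 ord_max || (x.1 ord_max != ord_max).
Proof.
rewrite -val_eqE /letter /=; have := ltn_ord (x.1 ord_max).
case: (x.2 _); move: (nat_of_ord _) => a lt_am /=; first by apply/negP; lia.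
by apply/idP/idP; lia.
Qed.

Lemma init_deranged_flip_last m (x : bperm m.+1) :
  init_deranged (flip_last x) = init_deranged x.
Proof. by apply: eq_forallb => i; rewrite /letter /= ffunE widen_neq_max. Qed.

Lemma init_deranged_extend m (z : bperm m) :
  init_deranged (extend z) = bderangement z.
Proof. by apply: eq_forallb => i; rewrite letter_extend_widen nth_bword. Qed.

Lemma inDeltaE m (x : bperm m.+1) : inDelta x = ~~ x.2 ord_max.
Proof.
by rewrite /inDelta bword_last last_rcons /letter; case: (x.2 _) => /=; lia.
Qed.

Section Weights.
Variables (R : numFieldType) (eps : R).
Hypothesis eps2 : eps ^+ 2 = 1.

Lemma expr_sign_odd k : eps ^+ k = eps ^+ odd k.
Proof. by rewrite -{1}(odd_double_half k) exprD -mul2n exprM eps2 expr1n mulr1. Qed.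

Definition weightD n (x : bperm n) : {poly R} :=
  (eps ^+ ellD (bword x))%:P * 'X ^+ Dmaj (bword x).

Definition weightB n (x : bperm n) : {poly R} :=
  (eps ^+ ellB (bword x))%:P * (eps%:P * 'X) ^+ fmaj (bword x).

Lemma weightBE n (x : bperm n) :
  weightB x = (eps ^+ (odd (ellB (bword x)) (+) odd (negw (bword x))))%:P
              * 'X ^+ fmaj (bword x).
Proof.
rewrite /weightB exprMn -(rmorphXn polyC) mulrA -polyCM -exprD.
by rewrite (expr_sign_odd (_ + _)) oddD odd_fmaj.
Qed.

Lemma weightD_last_pos m (x : bperm m.+1) :
  ~~ x.2 ord_max -> weightD x = weightB x.
Proof.
move=> last_pos; rewrite weightBE /weightD Dmaj_last_pos //.
by rewrite expr_sign_odd odd_ellD.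
Qed.

Lemma weightD_flip_last m (x : bperm m.+1) :
  ~~ x.2 ord_max -> weightD (flip_last x) = weightB x.
Proof.
move=> last_pos; rewrite weightBE /weightD Dmaj_flip_last // expr_sign_odd odd_ellD.
by rewrite odd_ellB_flip_last // odd_negw_flip_last // addbN addNb negbK.
Qed.

Lemma weightD_pair m (y : bperm m.+1) : ~~ y.2 ord_max ->
  (if bderangement y && inD y then weightD y else 0)
  + (if bderangement (flip_last y) && inD (flip_last y)
     then weightD (flip_last y) else 0)
  = (if bderangement y then weightB y else 0)
  + (if [&& y.1 ord_max == ord_max, init_deranged y & odd (negw (bword y))]
     then weightB y else 0).
Proof.
move=> last_pos; rewrite weightD_flip_last // weightD_last_pos //.
rewrite /inD odd_negw_flip_last // negbK !bderangement_last.
rewrite init_deranged_flip_last !letter_last_neq flip_last_max (negbTE last_pos) /=.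
case: (init_deranged y); case: (y.1 ord_max == ord_max); case: (odd _) => /=.
all: by rewrite ?addr0 ?add0r.
Qed.

Lemma half_difference_extend m :
  (eps / 2)%:P *
      (\sum_(x : bperm m | bderangement x)
          (eps ^+ ellB (bword x))%:P * 'X ^+ fmaj (bword x)
       - \sum_(x : bperm m | bderangement x)
          (eps ^+ ellB (bword x))%:P * (- 'X) ^+ fmaj (bword x))
  = \sum_(y : bperm m.+1 | [&& ~~ y.2 ord_max, y.1 ord_max == ord_max
                             & init_deranged y && odd (negw (bword y))]) weightB y.
Proof.
rewrite big_extend -sumrB mulr_sumr.
rewrite (bigID (fun z : bperm m => odd (negw (bword z)))) /=.
rewrite [X in _ + X]big1 ?addr0; last first.
  move=> z /andP[_ even_z]; rewrite exprNn -signr_odd odd_fmaj (negbTE even_z).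
  by rewrite mul1r subrr mulr0.
apply: eq_big => [z|z /andP[_ odd_z]].
  by rewrite init_deranged_extend negw_extend.
rewrite exprNn -signr_odd odd_fmaj odd_z /weightB ellB_extend fmaj_extend.
rewrite exprMn -(rmorphXn polyC) (expr_sign_odd (fmaj _)) odd_fmaj odd_z.
have half_eps : (eps / 2)%:P *+ 2 = eps%:P :> {poly R}.
  by rewrite -(rmorphMn polyC) -mulr_natr divfK ?pnatr_eq0.
by rewrite !expr1 mulN1r mulrN opprK -mulr2n mulrnAr -mulrnAl half_eps mulrCA.
Qed.

End Weights.

Unset Implicit Arguments.

Theorem lemma4p8 (eps : rat) (n : nat) :
  (eps = 1 \/ eps = -1) -> (2 <= n)%N ->
  \sum_(x : bperm n | bderangement x && inD x)
      (eps ^+ ellD (bword x))%:P * 'X ^+ Dmaj (bword x)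
  = \sum_(x : bperm n | bderangement x && inDelta x)
      (eps ^+ ellB (bword x))%:P * (eps%:P * 'X) ^+ fmaj (bword x)
    + (eps / 2)%:P *
      (\sum_(x : bperm n.-1 | bderangement x)
          (eps ^+ ellB (bword x))%:P * 'X ^+ fmaj (bword x)
       - \sum_(x : bperm n.-1 | bderangement x)
          (eps ^+ ellB (bword x))%:P * (- 'X) ^+ fmaj (bword x)) :> {poly rat}.
Proof.
move=> eps_sign; case: n => [|m] // _.
have eps2 : eps ^+ 2 = 1 by case: eps_sign => ->; rewrite ?sqrrN expr1n.
rewrite /= (half_difference_extend eps2) [in RHS](eq_bigr (@weightB _ eps _)) //.
rewrite [LHS](eq_bigr (@weightD _ eps _)) // big_mkcond big_flip_last.
under [X in _ = X + _]eq_bigl do rewrite inDeltaE andbC.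
rewrite !big_mkcondr -big_split.
by apply: eq_bigr => y; apply: weightD_pair.
Qed.
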